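(* Let $P$ be a finite lattice. The image of the characteristic map $\chi\colon \mathrm{Tr}(P)\to \mathrm{End}(P)$, $R\mapsto\chi^R$, is exactly the set $\mathrm{End}^\circ(P)$ of interior operators on $P$.
   Context: For a finite lattice $(P,\le)$, a transfer system on $P$ is a partial order $R$ on $P$ refining $\le$ (i.e. $x\,R\,y\Rightarrow x\le y$) that is closed under restriction: if $x\,R\,z$ and $y\le z$ then $(x\wedge y)\,R\,y$. $\mathrm{Tr}(P)$ is the set of transfer systems on $P$ ordered by inclusion of relations. For $R\in\mathrm{Tr}(P)$ and $x\in P$, the set $\{y\in P: y\,R\,x\}$ has a least element, and the characteristic function $\chi^R\colon P\to P$ sends $x$ to this least element. $\mathrm{End}(P)$ is the set of monotone maps $P\to P$ with the pointwise order. An interior operator is a monotone $f\colon P\to P$ with $f(x)\le x$ and $f(f(x))=f(x)$ for all $x$; $\mathrm{End}^\circ(P)\subseteq\mathrm{End}(P)$ is the set of interior operators. *)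

From mathcomp Require Import all_boot all_order.
Set Implicit Arguments. Unset Strict Implicit. Unset Printing Implicit Defensive.
Import Order.TTheory.
Local Open Scope order_scope.

Definition transfer_system (d : Order.disp_t) (P : finLatticeType d) (R : rel P) : Prop :=
  [/\ reflexive R, antisymmetric R, transitive R,
      (forall x y, R x y -> x <= y) &
      (forall x y z, R x z -> y <= z -> R (x `&` y) y)].

Definition is_least (d : Order.disp_t) (P : finLatticeType d) (S : pred P) (m : P) : Prop :=
  S m /\ (forall y, S y -> m <= y).

Definition is_chi (d : Order.disp_t) (P : finLatticeType d) (R : rel P) (f : P -> P) : Prop :=
  forall x, is_least (fun y => R y x) (f x).

Definition monotone_map (d : Order.disp_t) (P : finLatticeType d) (f : P -> P) : Prop :=
  {homo f : x y / x <= y}.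

Definition interior_operator (d : Order.disp_t) (P : finLatticeType d) (f : P -> P) : Prop :=
  [/\ monotone_map f, (forall x, f x <= x) & (forall x, f (f x) = f x)].

From mathcomp Require Import all_boot all_order.
Set Implicit Arguments. Unset Strict Implicit. Unset Printing Implicit Defensive.
Import Order.TTheory.
Local Open Scope order_scope.

(* Forward inclusion: if f = chi^R for a transfer system R, then f x R x, so
   f x <= x because R refines <=.  Restricting f y R y along x <= y gives
   (f y `&` x) R x, whence f x <= f y: f is monotone.  By transitivity of R,
   f (f x) R f x R x, so f x <= f (f x), and with deflation f is idempotent.

   Reverse inclusion: an interior operator f is chi^R for the relation
   x R_f y := x <= y /\ f y <= x, whose down-set below y is the interval
   [f y, y] with least element f y.  R_f is a transfer system: transitivity
   uses f z = f (f z) <= f y, and restriction uses f y <= f z. *)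

Section CharacteristicFunction.
Variables (d : Order.disp_t) (P : finLatticeType d).
Variables (R : rel P) (f : P -> P).
Hypotheses (trR : transfer_system R) (chiRf : is_chi R f).

Lemma chi_rel (x : P) : R (f x) x.
Proof. exact: (chiRf x).1. Qed.

Lemma chi_least (x y : P) : R y x -> f x <= y.
Proof. exact: (chiRf x).2. Qed.

Lemma chi_deflationary (x : P) : f x <= x.
Proof. by case: trR => _ _ _ Rle _; apply: Rle; exact: chi_rel. Qed.

(* chi^R is monotone: restrict f y R y along x <= y. *)
Lemma chi_monotone : monotone_map f.
Proof.
case: trR => _ _ _ _ Rres x y xy.
have fyIx_R_x : R (f y `&` x) x := Rres _ _ _ (chi_rel y) xy.
exact: le_trans (chi_least fyIx_R_x) (leIl _ _).
Qed.

(* chi^R is idempotent: f (f x) R f x R x gives f x <= f (f x). *)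
Lemma chi_idempotent (x : P) : f (f x) = f x.
Proof.
case: trR => _ _ Rtrans _ _.
apply/eqP; rewrite eq_le chi_deflationary /=.
exact/chi_least/(Rtrans _ _ _ (chi_rel (f x)) (chi_rel x)).
Qed.

Lemma chi_interior : interior_operator f.
Proof. split; [exact: chi_monotone | exact: chi_deflationary | exact: chi_idempotent]. Qed.

End CharacteristicFunction.

Section InteriorTransfer.
Variables (d : Order.disp_t) (P : finLatticeType d) (f : P -> P).
Hypothesis intf : interior_operator f.

Definition interior_rel : rel P := fun x y => (x <= y) && (f y <= x).

Lemma interior_rel_transfer : transfer_system interior_rel.
Proof.
case: intf => fmono fdefl fidem; split.
- by move=> x; rewrite /interior_rel lexx fdefl.
- move=> x y /andP [/andP [xy _] /andP [yx _]].
  by apply/eqP; rewrite eq_le xy yx.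
- move=> y x z /andP [xy fyx] /andP [yz fzy].
  rewrite /interior_rel (le_trans xy yz) /= -fidem.
  exact: le_trans (fmono _ _ fzy) fyx.
- by move=> x y /andP [].
- move=> x y z /andP [_ fzx] yz.
  rewrite /interior_rel leIr /= lexI fdefl andbT.
  exact: le_trans (fmono _ _ yz) fzx.
Qed.

Lemma interior_rel_chi : is_chi interior_rel f.
Proof.
have [_ fdefl _] := intf.
move=> y; split; first by rewrite /interior_rel lexx fdefl.
by move=> x /andP [].
Qed.

End InteriorTransfer.

Theorem theorem2p7 (d : Order.disp_t) (P : finLatticeType d) (f : P -> P) :
  (exists R : rel P, transfer_system R /\ is_chi R f) <-> interior_operator f.
Proof.
split.
- by move=> [R [trR chiRf]]; exact: chi_interior trR chiRf.
- move=> intf; exists (interior_rel f).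
  by split; [exact: interior_rel_transfer | exact: interior_rel_chi].
Qed.
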